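(* Let $L>0$, $\epsilon>0$, $x\in\mathbb{R}$, and set $t=\sqrt{2\epsilon/L}$. Suppose $f,g:[x-t,x+t]\to\mathbb{R}$ are such that (a) $g$ is concave and differentiable on $[x-t,x+t]$, (b) $f'$ exists and is $L$-Lipschitz on $[x-t,x+t]$, and (c) $|f(a)-g(a)|\le\epsilon$ for all $a\in\{x-t,x,x+t\}$. Then $|f'(x)-g'(x)|\le2\sqrt{2L\epsilon}$. *)

From Stdlib Require Import Reals Lra.
Open Scope R_scope.

Definition has_deriv_within (a b : R) (f : R -> R) (y l : R) : Prop :=
  forall e : R, 0 < e -> exists d : R, 0 < d /\
    forall z : R, a <= z <= b -> z <> y -> Rabs (z - y) < d ->
      Rabs ((f z - f y) / (z - y) - l) <= e.

Definition concave_on (a b : R) (g : R -> R) : Prop :=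
  forall u v lam : R, a <= u <= b -> a <= v <= b -> 0 <= lam <= 1 ->
    lam * g u + (1 - lam) * g v <= g (lam * u + (1 - lam) * v).

Definition lipschitz_on (a b L : R) (h : R -> R) : Prop :=
  forall u v : R, a <= u <= b -> a <= v <= b -> Rabs (h u - h v) <= L * Rabs (u - v).

From Stdlib Require Import Reals Lra.
Open Scope R_scope.

(* Compare secants over [x, x+t] and [x-t, x].  Since f' is L-Lipschitz, the
   secant slopes of f lie within L t of f'(x), while concavity puts the secant
   slopes of g on either side of g'(x).  As f and g agree up to eps at the three
   nodes, t |f'(x) - g'(x)| <= L t^2 + 2 eps, and t = sqrt (2 eps / L) turns the
   right-hand side into 4 eps = 2 sqrt (2 L eps) t. *)

Lemma Rabs_le_inv (u e : R) : Rabs u <= e -> - e <= u <= e.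
Proof. unfold Rabs; destruct (Rcase_abs u); lra. Qed.

Lemma Rabs_div_sub_le (A B l e : R) :
  B <> 0 -> Rabs (A / B - l) <= e -> Rabs (A - l * B) <= e * Rabs B.
Proof.
  intros HB H. replace (A - l * B) with ((A / B - l) * B) by (field; exact HB).
  rewrite Rabs_mult. apply Rmult_le_compat_r; [apply Rabs_pos | exact H].
Qed.

Section DerivWithin.

Variables a b : R.

Lemma has_deriv_within_opp (h : R -> R) (y l : R) :
  has_deriv_within a b h y l -> has_deriv_within a b (fun z => - h z) y (- l).
Proof.
  intros H e He. destruct (H e He) as [d [Hd Hq]]. exists d. split; [exact Hd|].
  intros z Hz Hzy Hzd.
  replace ((- h z - - h y) / (z - y) - - l) with (- ((h z - h y) / (z - y) - l))
    by (field; lra).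
  rewrite Rabs_Ropp. exact (Hq z Hz Hzy Hzd).
Qed.

Lemma has_deriv_within_sub_linear (h : R -> R) (y l K : R) :
  has_deriv_within a b h y l ->
  has_deriv_within a b (fun z => h z - K * z) y (l - K).
Proof.
  intros H e He. destruct (H e He) as [d [Hd Hq]]. exists d. split; [exact Hd|].
  intros z Hz Hzy Hzd.
  replace ((h z - K * z - (h y - K * y)) / (z - y) - (l - K))
    with ((h z - h y) / (z - y) - l) by (field; lra).
  exact (Hq z Hz Hzy Hzd).
Qed.

Lemma has_deriv_within_neg_local (h : R -> R) (s l : R) :
  has_deriv_within a b h s l -> l < 0 ->
  exists d, 0 < d /\ forall z, a <= z <= b -> Rabs (z - s) < d ->
    (s < z -> h z < h s) /\ (z < s -> h s < h z).
Proof.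
  intros H Hl. destruct (H (- l / 2)) as [d [Hd Hq]]; [lra|].
  exists d. split; [exact Hd|]. intros z Hz Hzd.
  assert (Hslope : z <> s ->
            - (- l / 2 * Rabs (z - s)) <= h z - h s - l * (z - s) <= - l / 2 * Rabs (z - s)).
  { intros Hzs. apply Rabs_le_inv, Rabs_div_sub_le; [lra|]. exact (Hq z Hz Hzs Hzd). }
  split; intros Hsz.
  - rewrite Rabs_right in Hslope by lra. specialize (Hslope ltac:(lra)). nra.
  - rewrite Rabs_left in Hslope by lra. specialize (Hslope ltac:(lra)). nra.
Qed.

(* Stdlib's MVT needs two-sided continuity at the endpoints, which a derivative
   within [a, b] does not provide; hence a supremum argument. *)
Lemma has_deriv_within_neg_nonincreasing (h h' : R -> R) (c d : R) :
  a <= c -> c <= d -> d <= b ->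
  (forall y, c <= y <= d -> has_deriv_within a b h y (h' y)) ->
  (forall y, c <= y <= d -> h' y < 0) -> h d <= h c.
Proof.
  intros Hac Hcd Hdb Hder Hneg.
  set (E := fun s => c <= s <= d /\ forall u, c <= u <= s -> h u <= h c).
  assert (Ec : E c) by (split; [lra | intros u Hu; replace u with c by lra; lra]).
  assert (Ebound : bound E) by (exists d; intros s [Hs _]; lra).
  destruct (completeness E Ebound (ex_intro _ c Ec)) as [s0 [Hub Hlub]].
  assert (Hcs0 : c <= s0) by (apply Hub; exact Ec).
  assert (Hs0d : s0 <= d) by (apply Hlub; intros s [Hs _]; lra).
  assert (below : forall u, c <= u < s0 -> h u <= h c).
  { intros u Hu. destruct (Rle_dec (h u) (h c)) as [|Hgt]; [assumption|].
    enough (s0 <= u) by lra.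
    apply Hlub. intros s [_ Hs]. apply Rnot_lt_le. intro Hus. apply Hgt, Hs. lra. }
  destruct (has_deriv_within_neg_local h s0 (h' s0) (Hder s0 ltac:(lra))
              (Hneg s0 ltac:(lra))) as [d0 [Hd0 Hloc]].
  assert (at_sup : h s0 <= h c).
  { destruct (Req_dec s0 c) as [->|Hs0c]; [lra|].
    set (z := Rmax c (s0 - d0 / 2)).
    assert (Hz : c <= z /\ s0 - d0 / 2 <= z) by (split; [apply Rmax_l | apply Rmax_r]).
    assert (Hzs0 : z < s0) by (apply Rmax_lub_lt; lra).
    assert (Hz_near : Rabs (z - s0) < d0) by (rewrite Rabs_left; lra).
    pose proof (proj2 (Hloc z ltac:(lra) Hz_near) Hzs0).
    pose proof (below z ltac:(lra)). lra. }
  enough (s0 = d) by (subst; exact at_sup).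
  destruct (Rle_lt_or_eq_dec s0 d Hs0d) as [Hlt|]; [exfalso|assumption].
  set (s1 := Rmin d (s0 + d0 / 2)).
  assert (Hs1 : s1 <= d /\ s1 <= s0 + d0 / 2) by (split; [apply Rmin_l | apply Rmin_r]).
  assert (Hs0s1 : s0 < s1) by (apply Rmin_glb_lt; lra).
  enough (E s1) by (pose proof (Hub s1 ltac:(assumption)); lra).
  split; [lra|]. intros u Hu.
  destruct (Rtotal_order u s0) as [Hus0|[->|Hus0]].
  - apply below. lra.
  - exact at_sup.
  - assert (Hu_near : Rabs (u - s0) < d0) by (rewrite Rabs_right; lra).
    pose proof (proj1 (Hloc u ltac:(lra) Hu_near) Hus0). lra.
Qed.

Lemma has_deriv_within_le_diff (h h' : R -> R) (c d M : R) :
  a <= c -> c <= d -> d <= b ->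
  (forall y, c <= y <= d -> has_deriv_within a b h y (h' y)) ->
  (forall y, c <= y <= d -> h' y <= M) -> h d - h c <= M * (d - c).
Proof.
  intros Hac Hcd Hdb Hder HM. apply Rle_plus_epsilon. intros e He.
  set (q := e / (d - c + 1)).
  assert (Hq : 0 < q /\ q * (d - c + 1) = e).
  { split; [apply Rdiv_lt_0_compat; lra | unfold q; field; lra]. }
  assert (Hslope : forall y, c <= y <= d -> h' y - (M + q) < 0).
  { intros y Hy. pose proof (HM y Hy). lra. }
  pose proof (has_deriv_within_neg_nonincreasing (fun z => h z - (M + q) * z)
               (fun y => h' y - (M + q)) c d Hac Hcd Hdb
               (fun y Hy => has_deriv_within_sub_linear h y (h' y) (M + q) (Hder y Hy))
               Hslope).
  cbv beta in *. nra.
Qed.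

Lemma has_deriv_within_ge_diff (h h' : R -> R) (c d m : R) :
  a <= c -> c <= d -> d <= b ->
  (forall y, c <= y <= d -> has_deriv_within a b h y (h' y)) ->
  (forall y, c <= y <= d -> m <= h' y) -> m * (d - c) <= h d - h c.
Proof.
  intros Hac Hcd Hdb Hder Hm.
  pose proof (has_deriv_within_le_diff (fun z => - h z) (fun y => - h' y) c d (- m)
               Hac Hcd Hdb (fun y Hy => has_deriv_within_opp h y (h' y) (Hder y Hy))
               (fun y Hy => Ropp_le_contravar _ _ (Hm y Hy))).
  cbv beta in *. lra.
Qed.

Lemma concave_le_tangent (g : R -> R) (y l z : R) :
  concave_on a b g -> a <= y <= b -> a <= z <= b ->
  has_deriv_within a b g y l -> g z - g y <= l * (z - y).
Proof.
  intros Hconc Hy Hz Hder.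
  destruct (Req_dec z y) as [->|Hzy]; [lra|].
  apply Rnot_lt_le. intro Hgap. set (D := g z - g y - l * (z - y)).
  set (r := Rabs (z - y)).
  assert (Hr : 0 < r) by (apply Rabs_pos_lt; lra).
  destruct (Hder (D / (2 * r))) as [d0 [Hd0 Hq]].
  { apply Rdiv_lt_0_compat; unfold D; lra. }
  set (lam := Rmin 1 (d0 / (2 * r))).
  assert (Hlam : 0 < lam <= 1).
  { split; [apply Rmin_glb_lt; [lra | apply Rdiv_lt_0_compat; lra] | apply Rmin_l]. }
  assert (Hlam_near : lam * r < d0).
  { assert (lam <= d0 / (2 * r)) by apply Rmin_r.
    assert (d0 / (2 * r) * r = d0 / 2) by (field; lra).
    nra. }
  set (w := lam * z + (1 - lam) * y).
  assert (Hwy : w - y = lam * (z - y)) by (unfold w; ring).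
  assert (Hwy_abs : Rabs (w - y) = lam * r)
    by (rewrite Hwy, Rabs_mult, Rabs_pos_eq; [reflexivity | lra]).
  assert (Hw : a <= w <= b) by (unfold w; split; nra).
  assert (Hwy_ne : w <> y).
  { intro Hw0. assert (lam * (z - y) = 0) as H0 by lra.
    apply Rmult_integral in H0. destruct H0; lra. }
  pose proof (Hconc z y lam Hz Hy ltac:(lra)) as Hchord. fold w in Hchord.
  assert (Htangent : g w - g y - l * (w - y) <= D / (2 * r) * (lam * r)).
  { rewrite <- Hwy_abs. apply Rabs_le_inv, Rabs_div_sub_le; [lra|].
    apply Hq; [exact Hw | exact Hwy_ne | lra]. }
  assert (D / (2 * r) * (lam * r) = lam * D / 2) by (field; lra).
  unfold D in *. rewrite Hwy in Htangent. nra.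
Qed.

End DerivWithin.

Lemma Rabs_deriv_sub_mul_le (L eps x t l : R) (f g df : R -> R) :
  0 <= L -> 0 < t ->
  concave_on (x - t) (x + t) g -> has_deriv_within (x - t) (x + t) g x l ->
  (forall y, x - t <= y <= x + t -> has_deriv_within (x - t) (x + t) f y (df y)) ->
  lipschitz_on (x - t) (x + t) L df ->
  Rabs (f (x - t) - g (x - t)) <= eps ->
  Rabs (f x - g x) <= eps ->
  Rabs (f (x + t) - g (x + t)) <= eps ->
  Rabs (df x - l) * t <= L * t ^ 2 + 2 * eps.
Proof.
  intros HL Ht Hconc Hg Hf Hlip Hleft Hmid Hright.
  assert (df_near : forall y, x - t <= y <= x + t -> df x - L * t <= df y <= df x + L * t).
  { intros y Hy.
    enough (Hdist : Rabs (df y - df x) <= L * t) by (apply Rabs_le_inv in Hdist; lra).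
    apply Rle_trans with (L * Rabs (y - x)); [apply Hlip; lra|].
    apply Rmult_le_compat_l; [exact HL | apply Rabs_le; lra]. }
  assert (f_right : (df x - L * t) * (x + t - x) <= f (x + t) - f x).
  { apply (has_deriv_within_ge_diff (x - t) (x + t) f df); try lra.
    - intros y Hy. apply Hf. lra.
    - intros y Hy. apply df_near. lra. }
  assert (f_left : f x - f (x - t) <= (df x + L * t) * (x - (x - t))).
  { apply (has_deriv_within_le_diff (x - t) (x + t) f df); try lra.
    - intros y Hy. apply Hf. lra.
    - intros y Hy. apply df_near. lra. }
  pose proof (concave_le_tangent (x - t) (x + t) g x l (x + t) Hconc
                ltac:(lra) ltac:(lra) Hg) as g_right.
  pose proof (concave_le_tangent (x - t) (x + t) g x l (x - t) Hconc
                ltac:(lra) ltac:(lra) Hg) as g_left.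
  apply Rabs_le_inv in Hleft, Hmid, Hright.
  rewrite <- (Rabs_pos_eq t) at 1 by lra. rewrite <- Rabs_mult.
  apply Rabs_le. split; nra.
Qed.

Theorem lemma8 (L eps x : R) (f g df dg : R -> R) :
  0 < L -> 0 < eps ->
  let t := sqrt (2 * eps / L) in
  (* (a) g concave and differentiable on [x-t, x+t], with derivative dg *)
  concave_on (x - t) (x + t) g ->
  (forall y, x - t <= y <= x + t -> has_deriv_within (x - t) (x + t) g y (dg y)) ->
  (* (b) f' = df exists on [x-t, x+t] and is L-Lipschitz there *)
  (forall y, x - t <= y <= x + t -> has_deriv_within (x - t) (x + t) f y (df y)) ->
  lipschitz_on (x - t) (x + t) L df ->
  (* (c) *)
  Rabs (f (x - t) - g (x - t)) <= eps ->
  Rabs (f x - g x) <= eps ->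
  Rabs (f (x + t) - g (x + t)) <= eps ->
  Rabs (df x - dg x) <= 2 * sqrt (2 * L * eps).
Proof.
  intros HL Heps t Hconc Hg Hf Hlip Hleft Hmid Hright.
  assert (Hratio : 0 < 2 * eps / L) by (apply Rdiv_lt_0_compat; lra).
  assert (Ht : 0 < t) by (apply sqrt_lt_R0; exact Hratio).
  assert (Ht2 : L * t ^ 2 = 2 * eps).
  { unfold t. rewrite pow2_sqrt by lra. field. lra. }
  assert (Hscale : 2 * sqrt (2 * L * eps) * t = 4 * eps).
  { unfold t. rewrite Rmult_assoc, <- sqrt_mult by nra.
    replace (2 * L * eps * (2 * eps / L)) with ((2 * eps) * (2 * eps)) by (field; lra).
    rewrite sqrt_square; lra. }
  pose proof (Rabs_deriv_sub_mul_le L eps x t (dg x) f g df ltac:(lra) Ht Hconc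
                (Hg x ltac:(lra)) Hf Hlip Hleft Hmid Hright) as Hgap.
  apply Rmult_le_reg_r with t; lra.
Qed.
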